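(* Let $\mathcal X,\mathcal Y$ be compact convex sets and $\mathcal L:\mathcal X\times\mathcal Y\to\mathbb R$ a differentiable convex-concave function that is uniformly strongly convex-concave with constants $(\mu_{\mathcal X},\mu_{\mathcal Y})$, $\mu_{\mathcal X},\mu_{\mathcal Y}>0$. Let $(x_c,y_c)$ belong to the relative interior of $\mathcal X\times\mathcal Y$ and define $\delta_x:=\min_{s_x\in\partial\mathcal X}\|s_x-x_c\|>0$ and $\delta_y:=\min_{s_y\in\partial\mathcal Y}\|s_y-y_c\|$. Then $$\mu^{x_c}_{\mathcal L}\ge\mu_{\mathcal X}\delta_x^2\qquad\text{and}\qquad\mu^{y_c}_{\mathcal L}\ge\mu_{\mathcal Y}\delta_y^2.$$
   Context: $\partial$ denotes the relative boundary. Uniformly strongly convex-concave: $\mathcal L(\cdot,y)$ is $\mu_{\mathcal X}$-strongly convex for every $y$ and $-\mathcal L(x,\cdot)$ is $\mu_{\mathcal Y}$-strongly convex for every $x$ (w.r.t. the norms used to define $\delta_x,\delta_y$). Interior strong convexity of a convex differentiable $f$ on a convex set $\mathcal K$ w.r.t. a point $x_c$ in its relative interior: $\mu_f^{x_c}:=\inf\frac2{\gamma^2}(f(u)-f(x)-\langle u-x,\nabla f(x)\rangle)$ over $x\in\mathcal K\setminus\{x_c\}$, $\gamma\in(0,1]$, $u=x+\gamma(s-x)$, where $s$ is the point where the ray from $x$ through $x_c$ meets the relative boundary of $\mathcal K$. Then $\mu^{x_c}_{\mathcal L}:=\inf_{y\in\mathcal Y}\mu^{x_c}_{\mathcal L(\cdot,y)}$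 and $\mu^{y_c}_{\mathcal L}:=\inf_{x\in\mathcal X}\mu^{y_c}_{-\mathcal L(x,\cdot)}$. *)

From HB Require Import structures.
From mathcomp Require Import all_boot all_order all_algebra.
From mathcomp Require Import all_classical all_reals all_analysis.
Set Implicit Arguments. Unset Strict Implicit. Unset Printing Implicit Defensive.
Import Order.TTheory GRing.Theory Num.Theory.
Import numFieldNormedType.Exports.
Local Open Scope classical_set_scope.
Local Open Scope ring_scope.

Section Defs.
Context {R : realType} {V : normedModType R}.

Definition aff_hull (K : set V) : set V :=
  [set z | exists s : seq (R * V),
      (forall p, p \in s -> K p.2) /\
      \sum_(p <- s) p.1 = 1 /\ z = \sum_(p <- s) p.1 *: p.2].

Definition relint (K : set V) : set V :=
  [set x | K x /\ exists e : R, 0 < e /\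
      forall z, aff_hull K z -> `|z - x| < e -> K z].

Definition relbd (K : set V) : set V := closure K `\` relint K.

Definition strongly_convex_on (mu : R) (K : set V) (f : V -> R) :=
  forall x u (t : R), K x -> K u -> 0 <= t <= 1 ->
    f (t *: x + (1 - t) *: u) <=
      t * f x + (1 - t) * f u - mu / 2 * t * (1 - t) * `|x - u| ^+ 2.

Definition convex_on (K : set V) (f : V -> R) :=
  forall x u (t : R), K x -> K u -> 0 <= t <= 1 ->
    f (t *: x + (1 - t) *: u) <= t * f x + (1 - t) * f u.

(* the values whose infimum is the interior strong convexity constant
   mu_f^{xc}; s is the point (other than the origin x of the ray) where
   the ray {x + t (xc - x) | t >= 0} meets the relative boundary of K;
   <u - x, grad f(x)> is the differential 'd f x applied to u - x. *)
Definition int_sc_values (K : set V) (xc : V) (f : V -> R) : set (\bar R) :=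
  [set z | exists x (g : R) s,
     [/\ K x, x <> xc, 0 < g <= 1,
         relbd K s /\ (exists t : R, 0 < t /\ s = x + t *: (xc - x)) &
         z = ((2 / g ^+ 2) *
                (f (x + g *: (s - x)) - f x - 'd f x (x + g *: (s - x) - x)))%:E]].

Definition int_sc (K : set V) (xc : V) (f : V -> R) : \bar R :=
  ereal_inf (int_sc_values K xc f).

End Defs.

Definition int_sc_L {R : realType} {V W : normedModType R}
  (X : set V) (Y : set W) (L : V -> W -> R) (xc : V) : \bar R :=
  ereal_inf [set int_sc X xc (fun x => L x y) | y in Y].

Definition int_sc_Lc {R : realType} {V W : normedModType R}
  (X : set V) (Y : set W) (L : V -> W -> R) (yc : W) : \bar R :=
  ereal_inf [set int_sc Y yc (fun y => - L x y) | x in X].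

From HB Require Import structures.
From mathcomp Require Import all_boot all_order all_algebra.
From mathcomp Require Import all_classical all_reals all_analysis.
From mathcomp Require Import ring lra.

Set Implicit Arguments.
Unset Strict Implicit.
Unset Printing Implicit Defensive.
Import Order.TTheory GRing.Theory Num.Theory.
Import numFieldNormedType.Exports.
Local Open Scope classical_set_scope.
Local Open Scope ring_scope.

(* Strong convexity gives the first-order bound
   f u >= f x + <u - x, grad f(x)> + mu/2 |u - x|^2, so each quotient in the
   infimum defining mu_f^{xc} is at least mu |s - x|^2.  Since K is convex and
   xc is relatively interior, every point of the open segment between x and xc
   is relatively interior, so the ray from x through xc leaves K beyond xc:
   |s - x| >= |s - xc| >= delta. *)

Section RelativeInterior.
Context {R : realType} {V : normedModType R}.
Implicit Types (K : set V) (x z : V) (t : R).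

Lemma convex_set_comb K a b t : convex_set (K : set (convex_lmodType V)) ->
  K a -> K b -> 0 <= t <= 1 -> K (t *: a + (1 - t) *: b).
Proof.
move=> cK Ka Kb /andP[t0 t1].
by have := cK a b (Itv01 t0 t1); rewrite !inE => /(_ Ka Kb).
Qed.

Lemma aff_hull_comb K z x (a b : R) : aff_hull K z -> K x -> a + b = 1 ->
  aff_hull K (a *: z + b *: x).
Proof.
move=> [s [sK [s1 ->]]] Kx ab1.
exists (map (fun p => (a * p.1, p.2)) s ++ [:: (b, x)]); split.
  move=> p; rewrite mem_cat => /orP[/mapP[q qs ->]|]; first exact: (sK q qs).
  by rewrite inE => /eqP ->.
rewrite !big_cat !big_map !big_seq1 /= -mulr_sumr s1 mulr1; split => //.
by rewrite scaler_sumr; congr (_ + _); apply: eq_bigr => p _; rewrite scalerA.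
Qed.

Lemma relint_convex_comb K a b t : convex_set (K : set (convex_lmodType V)) ->
  relint K a -> K b -> 0 < t <= 1 -> relint K (t *: a + (1 - t) *: b).
Proof.
move=> cK [Ka [e [e0 ballK]]] Kb /andP[t0 t1].
split; first by apply: convex_set_comb; rewrite ?(ltW t0).
exists (t * e); split; first by rewrite mulr_gt0.
move=> z Az zp.
(* z is the image of w under the homothety of ratio t centred at b *)
set w := t^-1 *: z + (1 - t^-1) *: b.
have Aw : aff_hull K w by apply: aff_hull_comb => //; rewrite addrC subrK.
have zE : z = t *: w + (1 - t) *: b.
  rewrite /w scalerDr !scalerA mulrBr mulr1 mulfV ?gt_eqF // scale1r -addrA.
  by rewrite -scalerDl addrA subrK subrr scale0r addr0.
have Kw : K w.
  apply: ballK => //; move: zp.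
  rewrite {1}zE opprD addrACA subrr addr0 -scalerBr normrZ gtr0_norm //.
  by rewrite ltr_pM2l.
by rewrite zE; apply: convex_set_comb; rewrite ?(ltW t0).
Qed.

Lemma relbd_ray_norm K x xc s t : convex_set (K : set (convex_lmodType V)) ->
  K x -> relint K xc -> relbd K s -> 0 < t -> s = x + t *: (xc - x) ->
  `|s - xc| <= `|s - x|.
Proof.
move=> cK Kx xcK [_ s_notint] t0 sE.
have t1 : 1 < t.
  rewrite ltNge; apply/negP => t1; apply: s_notint.
  have -> : s = t *: xc + (1 - t) *: x.
    by rewrite sE scalerBr scalerBl scale1r addrCA.
  by apply: relint_convex_comb => //; rewrite t0.
have -> : s - xc = (t - 1) *: (xc - x).
  by rewrite sE scalerBl scale1r opprB addrAC addrC.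
have -> : s - x = t *: (xc - x) by rewrite sE addrAC subrr add0r.
by rewrite !normrZ ler_wpM2r // !gtr0_norm ?subr_gt0 // gerBl.
Qed.

Lemma relbd_subset K : closed K -> relbd K `<=` K.
Proof. by move=> /closure_id {2}-> s []. Qed.

End RelativeInterior.

Section Products.
Context {R : realType} {V W : normedModType R}.

Lemma sum_scale_pair (s : seq (R * (V * W))) :
  \sum_(p <- s) p.1 *: p.2 =
  (\sum_(p <- s) p.1 *: p.2.1, \sum_(p <- s) p.1 *: p.2.2).
Proof.
by elim: s => [|p s IH]; rewrite ?big_nil // !big_cons IH; case: p => ? [].
Qed.

Lemma aff_hull_setX_l (X : set V) (Y : set W) x y :
  aff_hull X x -> Y y -> aff_hull (X `*` Y) (x, y).
Proof.
move=> [s [sX [s1 ->]]] Yy.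
exists (map (fun p => (p.1, (p.2, y))) s); split.
  by move=> p /mapP[q qs ->]; split => //; exact: sX.
by rewrite sum_scale_pair !big_map /= -scaler_suml s1 scale1r.
Qed.

Lemma aff_hull_setX_r (X : set V) (Y : set W) x y :
  X x -> aff_hull Y y -> aff_hull (X `*` Y) (x, y).
Proof.
move=> Xx [s [sY [s1 ->]]].
exists (map (fun p => (p.1, (x, p.2))) s); split.
  by move=> p /mapP[q qs ->]; split => //; exact: sY.
by rewrite sum_scale_pair !big_map /= -scaler_suml s1 scale1r.
Qed.

Lemma relint_setX_fst (X : set V) (Y : set W) p :
  relint (X `*` Y) p -> relint X p.1.
Proof.
case: p => x y [[Xx Yy] [e [e0 ballXY]]]; split => //; exists e; split => //.
move=> z Az zx; have [] // := ballXY (z, y); first exact: aff_hull_setX_l.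
by rewrite prod_normE gt_max /= subrr normr0 e0 andbT.
Qed.

Lemma relint_setX_snd (X : set V) (Y : set W) p :
  relint (X `*` Y) p -> relint Y p.2.
Proof.
case: p => x y [[Xx Yy] [e [e0 ballXY]]]; split => //; exists e; split => //.
move=> z Az zy; have [] // := ballXY (x, z); first exact: aff_hull_setX_r.
by rewrite prod_normE gt_max /= subrr normr0 e0.
Qed.

Lemma differentiable_partial1 (L : V -> W -> R) x y :
  differentiable (fun p : V * W => L p.1 p.2) (x, y) ->
  differentiable (L ^~ y) x.
Proof.
move=> dL; have dpair : differentiable (fun z : V => (z, y)) x.
  by apply: differentiable_pair; [exact: ex_diff | exact: differentiable_cst].
exact: (differentiable_comp dpair dL).
Qed.

Lemma differentiable_partial2 (L : V -> W -> R) x y :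
  differentiable (fun p : V * W => L p.1 p.2) (x, y) ->
  differentiable (L x) y.
Proof.
move=> dL; have dpair : differentiable (fun z : W => (x, z)) y.
  by apply: differentiable_pair; [exact: differentiable_cst | exact: ex_diff].
exact: (differentiable_comp dpair dL).
Qed.

End Products.

Section StrongConvexity.
Context {R : realType} {V : normedModType R}.
Variables (K : set V) (f : V -> R) (mu : R).
Hypothesis scK : strongly_convex_on mu K f.

Lemma strongly_convex_first_order x u : differentiable f x -> K x -> K u ->
  f x + 'd f x (u - x) + mu / 2 * `|u - x| ^+ 2 <= f u.
Proof.
move=> dfx Kx Ku; set v := u - x; set c := mu / 2 * `|v| ^+ 2.
rewrite -deriveE //.
set q := fun h : R => h^-1 *: ((f \o shift x) (h *: v) - f x).
have qD : q @ 0^'+ --> 'D_v f x.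
  by apply: cvg_dnbhs_at_right; exact: (@diff_derivable _ _ _ f x v dfx).
have qcD : (fun h => q h - h * c) @ 0^'+ --> 'D_v f x - 0 * c.
  by apply: cvgB => //; apply: cvgMr_tmp; apply: cvg_at_right_filter.
rewrite mul0r subr0 in qcD.
(* strong convexity on [x, u] bounds q h - h c by f u - f x - c for 0 < h < 1 *)
suff : 'D_v f x <= f u - f x - c by lra.
apply: (cvgr_to_le qcD); near=> h.
have h0 : 0 < h by near: h; exact: nbhs_right_gt.
have h1 : h < 1 by near: h; exact: nbhs_right_lt ltr01.
have hq : h * q h = f (h *: u + (1 - h) *: x) - f x.
  rewrite /q /= [X in h * X]/(h^-1 * _) mulrA mulfV ?gt_eqF // mul1r.
  by rewrite /v scalerBr scalerBl scale1r -addrA [- _ + x]addrC.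
have /(scK Ku Kx) scI : 0 <= h <= 1 by rewrite !ltW.
by rewrite -(ler_pM2l h0) mulrBr hq -/v /c; nra.
Unshelve. all: by end_near.
Qed.

Lemma strongly_convex_quotient_ge x s (g : R) :
  convex_set (K : set (convex_lmodType V)) -> differentiable f x ->
  K x -> K s -> 0 < g <= 1 ->
  mu * `|s - x| ^+ 2 <=
  2 / g ^+ 2 * (f (x + g *: (s - x)) - f x - 'd f x (x + g *: (s - x) - x)).
Proof.
move=> cK dfx Kx Ks /andP[g0 g1].
have uE : x + g *: (s - x) = g *: s + (1 - g) *: x.
  by rewrite scalerBr scalerBl scale1r addrCA.
have Ku : K (x + g *: (s - x)).
  by rewrite uE; apply: convex_set_comb; rewrite ?(ltW g0).
have := strongly_convex_first_order dfx Kx Ku.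
rewrite [x + _]addrC addrK normrZ gtr0_norm //.
have -> : mu * `|s - x| ^+ 2 = 2 / g ^+ 2 * (mu / 2 * (g * `|s - x|) ^+ 2).
  by field; rewrite gt_eqF.
move=> fo; rewrite ler_wpM2l ?mulr_ge0 ?invr_ge0 ?exprn_ge0 ?(ltW g0) //.
by lra.
Qed.

Lemma int_sc_ge xc delta : closed K -> convex_set (K : set (convex_lmodType V)) ->
  (forall x, K x -> differentiable f x) -> 0 <= mu -> relint K xc ->
  (forall s, relbd K s -> delta <= `|s - xc|) -> 0 <= delta ->
  ((mu * delta ^+ 2)%:E <= int_sc K xc f)%E.
Proof.
move=> clK cK df mu0 xcK delta_le d0.
apply: le_ereal_inf_tmp => _ [x [g [s [Kx _ g01 [bs [t [t0 sE]]] ->]]]].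
rewrite lee_fin; apply: le_trans (strongly_convex_quotient_ge cK (df x Kx) Kx
  (relbd_subset clK bs) g01).
have delta_sx : delta <= `|s - x|.
  exact: le_trans (delta_le s bs) (relbd_ray_norm cK Kx xcK bs t0 sE).
by rewrite ler_wpM2l // lerXn2r // nnegrE.
Qed.

End StrongConvexity.

Lemma int_sc_L_ge {R : realType} {V W : normedModType R}
    (X : set V) (Y : set W) (L : V -> W -> R) mu xc delta :
  closed X -> convex_set (X : set (convex_lmodType V)) ->
  (forall x y, X x -> Y y -> differentiable (L ^~ y) x) -> 0 <= mu ->
  (forall y, Y y -> strongly_convex_on mu X (L ^~ y)) -> relint X xc ->
  (forall s, relbd X s -> delta <= `|s - xc|) -> 0 <= delta ->
  ((mu * delta ^+ 2)%:E <= int_sc_L X Y L xc)%E.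
Proof.
move=> clX cX dL mu0 scL xcX delta_le d0.
apply: le_ereal_inf_tmp => _ [y Yy <-].
by apply: (int_sc_ge (scL y Yy)) => // x Xx; exact: dL.
Qed.

Theorem proposition12 (R : realType) (V W : normedModType R)
  (X : set V) (Y : set W) (L : V -> W -> R) (muX muY : R)
  (xc : V) (yc : W) (deltax deltay : R) :
  compact X -> compact Y ->
  convex_set (X : set (convex_lmodType V)) ->
  convex_set (Y : set (convex_lmodType W)) ->
  (forall x y, X x -> Y y -> differentiable (fun p : V * W => L p.1 p.2) (x, y)) ->
  (forall y, Y y -> convex_on X (fun x => L x y)) ->
  (forall x, X x -> convex_on Y (fun y => - L x y)) ->
  0 < muX -> 0 < muY ->
  (forall y, Y y -> strongly_convex_on muX X (fun x => L x y)) ->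
  (forall x, X x -> strongly_convex_on muY Y (fun y => - L x y)) ->
  relint (X `*` Y) (xc, yc) ->
  (exists2 s, relbd X s & `|s - xc| = deltax) ->
  (forall s, relbd X s -> deltax <= `|s - xc|) ->
  0 < deltax ->
  (exists2 s, relbd Y s & `|s - yc| = deltay) ->
  (forall s, relbd Y s -> deltay <= `|s - yc|) ->
  ((muX * deltax ^+ 2)%:E <= int_sc_L X Y L xc)%E /\
  ((muY * deltay ^+ 2)%:E <= int_sc_Lc X Y L yc)%E.
Proof.
move=> cpX cpY cX cY dL _ _ muX0 muY0 scX scY cint _ deltax_le deltax0
  [sy _ <-] deltay_le.
have clX := compact_closed (@norm_hausdorff R V) cpX.
have clY := compact_closed (@norm_hausdorff R W) cpY.
split.
- apply: int_sc_L_ge (ltW muX0) scX (relint_setX_fst cint) deltax_le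
    (ltW deltax0) => //.
  by move=> x y Xx Yy; apply: differentiable_partial1; exact: dL.
(* int_sc_Lc X Y L is int_sc_L Y X for the swapped function (y, x) |-> - L x y *)
- apply: (@int_sc_L_ge _ _ _ Y X (fun y x => - L x y)) (ltW muY0) scY
    (relint_setX_snd cint) deltay_le _ => //.
  move=> y x Yy Xx; apply: differentiableN.
  by apply: differentiable_partial2; exact: dL.
Qed.
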